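(* Let $N$ be an oriented subnetwork of $\Gamma(T)$. Let ${\bf t}_i,{\bf t}_{i'},{\bf t}_j,{\bf t}_{j'}\in T$ with ${\bf t}_{i'}=(a,c)$, ${\bf t}_i=(b,d)$, ${\bf t}_{j'}=(e,g)$, ${\bf t}_j=(f,h)$, where $a<b$, $c<d$, $e<f$, $g<h$, so that $R_{i,i'}=[a,b]\times[c,d]$ and $R_{j,j'}=[e,f]\times[g,h]$ both have positive slope. Assume the two rectangles form a crossing configuration in the sense that $[a,b]\subseteq[e,f]$ and $[g,h]\subseteq[c,d]$. Suppose $N$ contains directed Manhattan paths from ${\bf t}_i$ to ${\bf t}_{i'}$, from ${\bf t}_{i'}$ to ${\bf t}_i$, from ${\bf t}_j$ to ${\bf t}_{j'}$ and from ${\bf t}_{j'}$ to ${\bf t}_j$. Then $N$ contains directed Manhattan paths from ${\bf t}_i$ to ${\bf t}_{j'}$, from ${\bf t}_{j'}$ to ${\bf t}_i$, from ${\bf t}_j$ to ${\bf t}_{i'}$ and from ${\bf t}_{i'}$ to ${\bf t}_j$. (The mirror-image statement, obtained by reflecting the plane in a vertical line, holds for rectangles of negative slope.)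
   Context: $T$ is a finite set of points (terminals) in the plane, no two on a common horizontal or vertical line. For points $p,q$, $R(p,q)$ is the smallest closed axis-parallel rectangle containing $p$ and $q$; for ${\bf t}_i,{\bf t}_j\in T$, $R_{i,j}=R({\bf t}_i,{\bf t}_j)$. $\Gamma(T)$ is the grid formed by the horizontal and vertical lines through the terminals, restricted to the bounding box of $T$: its vertices are the intersection points of these lines and its edges are the segments between consecutive vertices on a line. An oriented subnetwork of $\Gamma(T)$ is a set of edges of $\Gamma(T)$, each directed in exactly one sense. A directed Manhattan path from $p$ to $q$ is a directed path in the network whose length equals $|p^x-q^x|+|p^y-q^y|$. A rectangle $R_{i,j}$ has positive slope if $({\bf t}_i^x-{\bf t}_j^x)({\bf t}_i^y-{\bf t}_j^y)>0$ and negative slope otherwise. *)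

From HB Require Import structures.
From mathcomp Require Import all_boot all_order all_algebra.
Set Implicit Arguments. Unset Strict Implicit. Unset Printing Implicit Defensive.
Import Order.TTheory GRing.Theory Num.Theory.
Local Open Scope ring_scope.

Section Grid.
Variable R : realFieldType.
Notation pt := (R * R)%type.

Definition general_position (T : seq pt) : Prop :=
  uniq T /\
  (forall p q, p \in T -> q \in T -> p != q -> p.1 != q.1 /\ p.2 != q.2).

Definition xs (T : seq pt) : seq R := [seq p.1 | p <- T].
Definition ys (T : seq pt) : seq R := [seq p.2 | p <- T].

Definition consec (s : seq R) (u v : R) : Prop :=
  u \in s /\ v \in s /\ u < v /\ (forall w, w \in s -> ~ (u < w /\ w < v)).

(* p, q are the endpoints of an (undirected) edge of the grid Gamma(T):
   a segment between consecutive grid vertices on a horizontal line or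
   on a vertical line through terminals. *)
Definition grid_edge (T : seq pt) (p q : pt) : Prop :=
  (p.2 = q.2 /\ p.2 \in ys T /\ (consec (xs T) p.1 q.1 \/ consec (xs T) q.1 p.1))
  \/
  (p.1 = q.1 /\ p.1 \in xs T /\ (consec (ys T) p.2 q.2 \/ consec (ys T) q.2 p.2)).

(* An oriented subnetwork: a set of directed edges N (N p q = edge directed
   from p to q), each an edge of Gamma(T), each edge used in at most one sense. *)
Definition oriented_subnetwork (T : seq pt) (N : rel pt) : Prop :=
  (forall p q, N p q -> grid_edge T p q) /\
  (forall p q, N p q -> ~~ N q p).

(* L1 distance; equals Euclidean length for axis-parallel segments. *)
Definition l1 (p q : pt) : R := `|p.1 - q.1| + `|p.2 - q.2|.

Fixpoint path_length (p : pt) (s : seq pt) : R :=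
  if s is q :: s' then l1 p q + path_length q s' else 0.

Definition dir_manhattan_path (N : rel pt) (p q : pt) : Prop :=
  exists s : seq pt, [/\ path N p s, last p s = q & path_length p s = l1 p q].

End Grid.

From HB Require Import structures.
From mathcomp Require Import all_boot all_order all_algebra.
From mathcomp Require Import lra.
Import Order.TTheory GRing.Theory Num.Theory.
Local Open Scope ring_scope.
Set Implicit Arguments. Unset Strict Implicit.

(* We work in a "frame": coordinate functions X, Y obtained from
   the usual ones by swapping them and/or negating both, so that l1 distances
   are still |dX| + |dY| and every coordinate is a grid coordinate of Gamma(T)
   (edges end on grid lines and never jump over one).  A directed Manhattan
   path whose end lies weakly below-left of its start is a "descent"; all its
   vertices lie in the box spanned by its endpoints.
   Crossing lemma: let descents start at grid vertices p and q, with p weakly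
   up-left of q, and end in the opposite order.  Walk along both, always
   advancing the path that is strictly higher (resp. further left); since an
   edge cannot jump over the grid line of the other current vertex, the order
   is kept until the two walks meet at some z, and then p ~> z ~> (end of the
   second path) is a directed Manhattan path. *)

Section Distances.
Variable R : realFieldType.
Notation pt := (R * R)%type.

Lemma dist_additive (x y z : R) :
  z <= x -> `|x - z| = `|x - y| + `|y - z| <-> z <= y /\ y <= x.
Proof.
move=> zx; rewrite (ger0_norm (_ : 0 <= x - z)); last by rewrite subr_ge0.
case: (lerP 0 (x - y)) => [h1|h1]; rewrite ?(ger0_norm h1) ?(ltr0_norm h1);
case: (lerP 0 (y - z)) => [h2|h2]; rewrite ?(ger0_norm h2) ?(ltr0_norm h2);
by split; [lra|case; lra].
Qed.

Lemma l1_triangle (p q r : pt) : l1 p r <= l1 p q + l1 q r.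
Proof.
rewrite /l1; have := ler_distD q.1 p.1 r.1; have := ler_distD q.2 p.2 r.2.
lra.
Qed.

Lemma l1_eq0 (p q : pt) : l1 p q = 0 -> p = q.
Proof.
case: p q => [p1 p2] [q1 q2]; rewrite /l1 /= => /eqP.
by rewrite paddr_eq0 // !normr_eq0 !subr_eq0 => /andP[/eqP-> /eqP->].
Qed.

Definition geodesic (p : pt) (s : seq pt) : Prop :=
  path_length p s = l1 p (last p s).

Lemma path_length_ge (p : pt) (s : seq pt) : l1 p (last p s) <= path_length p s.
Proof.
elim: s p => [|q s IH] p /=; first by rewrite /l1 !subrr normr0 addr0.
by apply: le_trans (l1_triangle p q _) _; rewrite lerD2l.
Qed.

Lemma path_length_cat (p : pt) (s1 s2 : seq pt) :
  path_length p (s1 ++ s2) = path_length p s1 + path_length (last p s1) s2.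
Proof. by elim: s1 p => [|q s IH] p /=; rewrite ?add0r // IH addrA. Qed.

Lemma geodesic_behead (p q : pt) (s : seq pt) :
  geodesic p (q :: s) ->
  geodesic q s /\ l1 p (last q s) = l1 p q + l1 q (last q s).
Proof.
rewrite /geodesic /= => E.
have := path_length_ge q s; have := l1_triangle p q (last q s).
by split; lra.
Qed.

End Distances.

Section ManhattanPaths.
Variables (R : realFieldType) (N : rel (R * R)).

Lemma dmp_of_geodesic p s :
  path N p s -> geodesic p s -> dir_manhattan_path N p (last p s).
Proof. by move=> Ps Gs; exists s. Qed.

Lemma dmp_edge p q : N p q -> dir_manhattan_path N p q.
Proof. by move=> Npq; exists [:: q]; rewrite /= Npq addr0. Qed.

Lemma dmp_cat p z w :
  dir_manhattan_path N p z -> dir_manhattan_path N z w ->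
  l1 p w = l1 p z + l1 z w -> dir_manhattan_path N p w.
Proof.
move=> [s1 [P1 L1 E1]] [s2 [P2 L2 E2]] E.
exists (s1 ++ s2); split; first by rewrite cat_path P1 L1 P2.
- by rewrite last_cat L1.
- by rewrite path_length_cat E1 L1 E2 E.
Qed.

End ManhattanPaths.

Section GridCoordinates.
Variables (R : realFieldType) (T : seq (R * R)).
Notation pt := (R * R)%type.

Definition strictly_between (x y z : R) : bool := (x < y < z) || (z < y < x).

Lemma strictly_between_opp x y z :
  strictly_between (- x) (- y) (- z) = strictly_between x y z.
Proof. by rewrite /strictly_between !ltrN2 [(y < x) && _]andbC [(y < z) && _]andbC orbC. Qed.

Definition on_grid (Z : pt -> R) (p : pt) : Prop := exists2 r, r \in T & Z r = Z p.

Definition gap_free (Z : pt -> R) (u v : pt) : Prop :=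
  forall r, r \in T -> ~~ strictly_between (Z u) (Z r) (Z v).

Definition grid_coordinate (Z : pt -> R) : Prop :=
  forall u v, grid_edge T u v -> on_grid Z v /\ gap_free Z u v.

Definition axis_step (Z : pt -> R) (u v : pt) : Prop :=
  (Z u = Z v /\ Z u \in [seq Z r | r <- T]) \/
  consec [seq Z r | r <- T] (Z u) (Z v) \/ consec [seq Z r | r <- T] (Z v) (Z u).

Lemma grid_edge_axes u v :
  grid_edge T u v -> axis_step fst u v /\ axis_step snd u v.
Proof.
case=> [[e2 [m2 C]] | [e1 [m1 C]]]; split; rewrite /axis_step.
- by right.
- by left; rewrite e2 -e2.
- by left; rewrite e1 -e1.
- by right.
Qed.

Lemma consec_gap (s : seq R) x y w :
  consec s x y -> w \in s -> ~~ strictly_between x w y.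
Proof.
move=> [_ [_ [xy noin]]] ws; apply/negP; rewrite /strictly_between.
case/orP=> /andP[h1 h2]; first exact: (noin w ws).
by move: (lt_trans xy (lt_trans h1 h2)); rewrite ltxx.
Qed.

Lemma axis_step_grid Z u v : axis_step Z u v -> on_grid Z v /\ gap_free Z u v.
Proof.
have on_map w : w \in [seq Z r | r <- T] -> exists2 r, r \in T & Z r = w.
  by case/mapP=> r rT ->; exists r.
case=> [[eZ /on_map onZ] | C]; split.
- by rewrite /on_grid -eZ.
- move=> r _; apply/negP; rewrite eZ /strictly_between orbb => /andP[h1 h2].
  by move: (lt_trans h1 h2); rewrite ltxx.
- by case: C => [[_ [/on_map]] | [/on_map]].
- move=> r rT; have rZ : Z r \in [seq Z r | r <- T] by apply: map_f.
  case: C => C; first exact: consec_gap C rZ.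
  by rewrite /strictly_between orbC; apply: consec_gap C rZ.
Qed.

Lemma grid_coordinate_fst : grid_coordinate fst.
Proof. by move=> u v /grid_edge_axes [/axis_step_grid]. Qed.

Lemma grid_coordinate_snd : grid_coordinate snd.
Proof. by move=> u v /grid_edge_axes [_ /axis_step_grid]. Qed.

Lemma grid_coordinate_opp Z : grid_coordinate Z -> grid_coordinate (fun p => - Z p).
Proof.
move=> gZ u v /gZ [[r rT Zr] gap]; split; first by exists r; rewrite ?Zr.
by move=> w wT; rewrite strictly_between_opp; apply: gap.
Qed.

End GridCoordinates.

Section Frames.
Variable R : realFieldType.
Notation pt := (R * R)%type.

Definition frame (X Y : pt -> R) : Prop :=
  forall u v, l1 u v = `|X u - X v| + `|Y u - Y v|.

Lemma frame_std : frame fst snd.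
Proof. by []. Qed.

Lemma frame_swap X Y : frame X Y -> frame Y X.
Proof. by move=> F u v; rewrite F addrC. Qed.

Lemma frame_opp X Y : frame X Y -> frame (fun p => - X p) (fun p => - Y p).
Proof. by move=> F u v; rewrite F -!opprD !normrN. Qed.

End Frames.

Section Crossing.
Variables (R : realFieldType) (T : seq (R * R)) (N : rel (R * R)).
Variables (X Y : R * R -> R).
Hypothesis frameXY : frame X Y.
Hypotheses (gridX : grid_coordinate T X) (gridY : grid_coordinate T Y).
Hypothesis N_grid : forall u v, N u v -> grid_edge T u v.
Notation pt := (R * R)%type.

Definition below (q p : pt) : Prop := X q <= X p /\ Y q <= Y p.

Definition grid_vertex (p : pt) : Prop := on_grid T X p /\ on_grid T Y p.

Definition descent (p : pt) (s : seq pt) : Prop :=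
  [/\ path N p s, geodesic p s, below (last p s) p & grid_vertex p].

Lemma frame_inj p q : X p = X q -> Y p = Y q -> p = q.
Proof. by move=> eX eY; apply: l1_eq0; rewrite frameXY eX eY !subrr normr0 addr0. Qed.

Lemma l1_box p q r :
  below r p -> l1 p r = l1 p q + l1 q r <-> below r q /\ below q p.
Proof.
move=> [Xrp Yrp]; rewrite !frameXY.
have := ler_distD (X q) (X p) (X r); have := ler_distD (Y q) (Y p) (Y r).
move: (dist_additive (X q) Xrp) (dist_additive (Y q) Yrp).
rewrite /below => [[DX DX'] [DY DY']] tY tX; split.
- move=> E; have [? ?] := DX (ltac:(lra)); have [? ?] := DY (ltac:(lra)).
  by split; split.
- move=> [[Xrq Yrq] [Xqp Yqp]].
  by rewrite (DX' (conj Xrq Xqp)) (DY' (conj Yrq Yqp)); lra.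
Qed.

Lemma terminal_grid_vertex p : p \in T -> grid_vertex p.
Proof. by move=> pT; split; exists p. Qed.

Lemma edge_blocked Z u v w :
  grid_coordinate T Z -> N u v -> on_grid T Z w -> Z w < Z u -> Z w <= Z v.
Proof.
move=> gZ /N_grid /gZ [_ gap] [r rT <-] ru; rewrite leNgt.
by apply: contra (gap r rT) => vr; rewrite /strictly_between vr ru orbT.
Qed.

Lemma descent_cons p p' s :
  descent p (p' :: s) -> [/\ N p p', descent p' s & below p' p].
Proof.
move=> [/= /andP[Npp' Ps] Gs end_p gp].
have [Gs' /(l1_box _ end_p) [end_p' p'p]] := geodesic_behead Gs.
have [[onX _] [onY _]] := (gridX (N_grid Npp'), gridY (N_grid Npp')).
by split.
Qed.

Lemma crossing p s q t :
  descent p s -> descent q t ->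
  X p <= X q -> Y q <= Y p ->
  X (last q t) <= X (last p s) -> Y (last p s) <= Y (last q t) ->
  dir_manhattan_path N p (last q t).
Proof.
have [n] := ubnP (size s + size t); elim: n => // n IH in p s q t *.
rewrite ltnS => size_st Ds Dt Xpq Yqp Xe Ye.
have [_ _ [Xep Yep] [gpX _]] := Ds; have [_ _ [Xeq Yeq] [_ gqY]] := Dt.
have [Yq_lt_p | Yp_le_q] := ltP (Y q) (Y p).
  (* p is strictly higher: advance the first walk to p', which stays weakly
     above the grid line of q; then prepend the edge p -> p'. *)
  case: s Ds size_st Xe Ye {Xep Yep} => [|p' s] Ds /= size_st Xe Ye; first lra.
  have [Npp' Ds' [Xp'p Yp'p]] := descent_cons Ds.
  have Yqp' : Y q <= Y p' := edge_blocked gridY Npp' gqY Yq_lt_p.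
  have [_ _ [Xep' Yep'] _] := Ds'.
  have Xp'q : X p' <= X q by lra.
  have qe_p : below (last q t) p by split; lra.
  apply: dmp_cat (dmp_edge Npp') (IH p' s q t _ Ds' Dt Xp'q Yqp' Xe Ye) _.
    by rewrite -addSn.
  by apply/(l1_box _ qe_p); split; split; lra.
(* Now Y p = Y q.  If q is strictly to the right, advance the second walk to
   q', which stays weakly right of the grid line of p. *)
have [Xp_lt_q | Xq_le_p] := ltP (X p) (X q).
  case: t Dt size_st Xe Ye {Xeq Yeq gqY} => [|q' t] Dt /= size_st Xe Ye; first lra.
  have [Nqq' Dt' [Xq'q Yq'q]] := descent_cons Dt.
  have Xpq' : X p <= X q' := edge_blocked gridX Nqq' gpX Xp_lt_q.
  have Yq'p : Y q' <= Y p by lra.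
  by apply: (IH p s q' t _ Ds Dt' Xpq' Yq'p Xe Ye); rewrite -addnS.
(* Otherwise the walks have met: p = q. *)
have -> : p = q by apply: frame_inj; lra.
by case: Dt => Pt Gt _ _; apply: dmp_of_geodesic.
Qed.

Lemma dmp_crossing p pe q qe :
  p \in T -> q \in T ->
  dir_manhattan_path N p pe -> dir_manhattan_path N q qe ->
  below pe p -> below qe q ->
  X p <= X q -> Y q <= Y p -> X qe <= X pe -> Y pe <= Y qe ->
  dir_manhattan_path N p qe.
Proof.
move=> pT qT [s [Ps <- Gs]] [t [Pt <- Gt]] pe_p qe_q.
by apply: crossing; split=> //; apply: terminal_grid_vertex.
Qed.

End Crossing.

Theorem lemma3p1 (R : realFieldType) (T : seq (R * R)) (N : rel (R * R))
    (a b c d e f g h : R) :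
  general_position T ->
  oriented_subnetwork T N ->
  (a, c) \in T -> (b, d) \in T -> (e, g) \in T -> (f, h) \in T ->
  a < b -> c < d -> e < f -> g < h ->
  e <= a -> b <= f -> c <= g -> h <= d ->
  dir_manhattan_path N (b, d) (a, c) ->
  dir_manhattan_path N (a, c) (b, d) ->
  dir_manhattan_path N (f, h) (e, g) ->
  dir_manhattan_path N (e, g) (f, h) ->
  [/\ dir_manhattan_path N (b, d) (e, g),
      dir_manhattan_path N (e, g) (b, d),
      dir_manhattan_path N (f, h) (a, c)
    & dir_manhattan_path N (a, c) (f, h)].
Proof.
move=> _ [N_grid _] ac_T bd_T eg_T fh_T ab cd ef gh ea bf cg hd
  bd_ac ac_bd fh_eg eg_fh.
have gx := grid_coordinate_fst (T := T); have gy := grid_coordinate_snd (T := T).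
have [gnx gny] := (grid_coordinate_opp gx, grid_coordinate_opp gy).
have std := frame_std (R := R).
split.
- (* frame (x, y): (b,d) ~> (a,c) crosses (f,h) ~> (e,g) *)
  apply: (dmp_crossing std gx gy N_grid bd_T fh_T bd_ac fh_eg);
  rewrite /below /=; do ?split; lra.
- (* frame (-y, -x): (e,g) ~> (f,h) crosses (a,c) ~> (b,d) *)
  apply: (dmp_crossing (frame_opp (frame_swap std)) gny gnx N_grid
    eg_T ac_T eg_fh ac_bd); rewrite /below /=; do ?split; lra.
- (* frame (y, x): (f,h) ~> (e,g) crosses (b,d) ~> (a,c) *)
  apply: (dmp_crossing (frame_swap std) gy gx N_grid fh_T bd_T fh_eg bd_ac);
  rewrite /below /=; do ?split; lra.
- (* frame (-x, -y): (a,c) ~> (b,d) crosses (e,g) ~> (f,h) *)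
  apply: (dmp_crossing (frame_opp std) gnx gny N_grid ac_T eg_T ac_bd eg_fh);
  rewrite /below /=; do ?split; lra.
Qed.
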